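(* Let $d\in\mathbb N$, $\mathcal D=\{1,\dots,d\}$, $f\in \mathrm L_2(\mathbb T^d)$ and $d_s\in\mathcal D$. Then $$\mathrm T_{d_s}f=\sum_{\substack{\mathbf u\subseteq\mathcal D\\|\mathbf u|\le d_s}}\left[\sum_{n=|\mathbf u|}^{d_s}(-1)^{n-|\mathbf u|}\binom{d-|\mathbf u|}{n-|\mathbf u|}\right]\mathrm P_{\mathbf u}f.$$
   Context: $\mathbb T=[0,1)$ with periodic identification. For $\mathbf u\subseteq\mathcal D$, $\mathbf u^c=\mathcal D\setminus\mathbf u$, $\mathbf x_{\mathbf u}=(x_i)_{i\in\mathbf u}$. Projection: $\mathrm P_{\mathbf u}f(\mathbf x_{\mathbf u})=\int_{\mathbb T^{|\mathbf u^c|}}f(\mathbf x)\,d\mathbf x_{\mathbf u^c}$, viewed as a function on $\mathbb T^d$. ANOVA terms: $f_{\mathbf u}=\mathrm P_{\mathbf u}f-\sum_{\mathbf v\subsetneq\mathbf u}f_{\mathbf v}$ (recursively). $\mathrm T_{d_s}f=\sum_{\mathbf u\subseteq\mathcal D,\,|\mathbf u|\le d_s}f_{\mathbf u}$. *)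

From HB Require Import structures.
From mathcomp Require Import all_boot all_order all_algebra.
From mathcomp Require Import all_classical all_reals all_analysis.
Set Implicit Arguments. Unset Strict Implicit. Unset Printing Implicit Defensive.
Import Order.TTheory GRing.Theory Num.Theory.
Local Open Scope classical_set_scope.
Local Open Scope ring_scope.

(* Points of T^d = [0,1)^d are d-tuples of reals (coordinates indexed by 'I_d,
   i.e. D = {0,...,d-1} instead of {1,...,d}). *)
Section anova.
Variable (R : realType) (d : nat).

Definition upd (x : d.-tuple R) (i : 'I_d) (t : R) : d.-tuple R :=
  [tuple (if j == i then t else tnth x j) | j < d].

Definition torus_pt (x : d.-tuple R) : Prop :=
  forall i : 'I_d, 0 <= tnth x i < 1.

Fixpoint iint (s : seq 'I_d) (g : d.-tuple R -> R) (x : d.-tuple R) : R :=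
  match s with
  | [::] => g x
  | i :: s' => Rintegral (@lebesgue_measure R) `[0%R, 1%R[
                 (fun t => iint s' g (upd x i t))
  end.

Fixpoint iint_e (s : seq 'I_d) (g : d.-tuple R -> \bar R) (x : d.-tuple R)
    : \bar R :=
  match s with
  | [::] => g x
  | i :: s' => (\int[@lebesgue_measure R]_(t in `[0%R, 1%R[)
                 iint_e s' g (upd x i t))%E
  end.

(* f in L_2(T^d): measurable (product Borel sigma-algebra on tuples) and
   square-integrable over [0,1)^d (the integral of the nonnegative |f|^2 is
   computed as an iterated integral, which equals the product-measure integral
   by Tonelli; the starting point is irrelevant since every coordinate is
   integrated out). *)
Definition L2_torus (f : d.-tuple R -> R) : Prop :=
  measurable_fun [set: d.-tuple R] f /\
  (iint_e (enum 'I_d) (fun x => ((f x) ^+ 2)%:E) [tuple (0%R : R) | _ < d] < +oo)%E.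

Definition projP (u : {set 'I_d}) (f : d.-tuple R -> R) (x : d.-tuple R) : R :=
  iint (enum (~: u)) f x.

(* ANOVA terms f_u = P_u f - sum_{v proper subset of u} f_v, defined by
   recursion with a fuel parameter; fuel #|u|.+1 is always sufficient. *)
Fixpoint anova_aux (n : nat) (f : d.-tuple R -> R) (u : {set 'I_d})
    (x : d.-tuple R) : R :=
  match n with
  | 0 => 0
  | n'.+1 => projP u f x - \sum_(v : {set 'I_d} | v \proper u) anova_aux n' f v x
  end.

Definition anova (f : d.-tuple R -> R) (u : {set 'I_d}) : d.-tuple R -> R :=
  anova_aux #|u|.+1 f u.

Definition trunc_anova (ds : nat) (f : d.-tuple R -> R) (x : d.-tuple R) : R :=
  \sum_(u : {set 'I_d} | (#|u| <= ds)%N) anova f u x.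

End anova.

(* The recursion defining the ANOVA terms is Moebius inversion on the lattice
   of subsets, f_u = Σ_{v ⊆ u} (-1)^(|u|-|v|) P_v f, which rests on the
   vanishing of Σ_{A ⊆ v ⊆ B} (-1)^|v| for A ⊊ B.  Summing over |u| ≤ d_s and
   exchanging the sums, the coefficient of P_v f is Σ_{v ⊆ u, |u| ≤ d_s}
   (-1)^(|u|-|v|), and v has exactly C(d-|v|, n-|v|) supersets of size n.
   The identity is combinatorial and holds pointwise for every f. *)

From HB Require Import structures.
From mathcomp Require Import all_boot all_order all_algebra zify.
From mathcomp Require Import all_classical all_reals all_analysis.
Import Order.TTheory GRing.Theory Num.Theory.
Local Open Scope ring_scope.

Section SubsetLattice.
Context {R : pzRingType} {T : finType}.
Implicit Types A B u v w : {set T}.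

Lemma sum_sign_interval A B : A \proper B ->
  \sum_(v : {set T} | (A \subset v) && (v \subset B)) (-1) ^+ #|v| = 0 :> R.
Proof.
case/properP => sAB [i iB niA].
(* Adding i matches the v without i to those with i, flipping the sign. *)
rewrite (bigID (fun v => i \in v)) /=.
rewrite (reindex_onto (fun v => i |: v) (fun v => v :\ i)) /=; last first.
  by move=> v /andP[_]; apply: finset.setD1K.
apply/eqP; rewrite addr_eq0 -sumrN; apply/eqP/eq_big => [v|v /andP[_ /eqP vE]].
  rewrite setU11 andbT finset.subUset finset.sub1set iB /=.
  have [iv|niv] := boolP (i \in v).
    by rewrite andbF; apply: contraTF iv => /andP[_ /eqP <-]; rewrite setD11.
  rewrite finset.setU1K // eqxx !andbT; congr (_ && _).
  by rewrite -{2}(finset.setU1K niv) finset.subsetD1 niA andbT.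
have niv : i \notin v by rewrite -vE setD11.
by rewrite cardsU1 niv exprS mulN1r.
Qed.

Lemma sum_sign_proper_supsets w u : w \proper u ->
  \sum_(v : {set T} | (v \proper u) && (w \subset v)) (-1) ^+ #|v|
  = - (-1) ^+ #|u| :> R.
Proof.
move=> wu; have := sum_sign_interval _ _ wu.
rewrite (bigD1 u) /= ?subxx ?andbT ?(proper_sub wu) // => /eqP.
rewrite addrC addr_eq0 => /eqP <-; apply: eq_bigl => v.
by rewrite finset.properEneq andbC [(v != u) && _]andbC andbA.
Qed.

Lemma subset_moebius_inversion (F P : {set T} -> R) :
  (forall u, F u = P u - \sum_(v : {set T} | v \proper u) F v) ->
  forall u, F u = \sum_(v : {set T} | v \subset u) (-1) ^+ (#|u| + #|v|) * P v.
Proof.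
move=> Fdef u; have [n] := ubnP #|u|; elim: n u => // n IH u /ltnSE le_u_n.
rewrite Fdef.
under eq_bigr => v vu do rewrite IH ?(leq_trans (proper_card vu) le_u_n) //.
rewrite (exchange_big_dep (fun w => w \proper u)) /=; last first.
  by move=> v w vu wv; apply: sub_proper_trans wv vu.
have inner w : w \proper u ->
  \sum_(v : {set T} | (v \proper u) && (w \subset v))
    (-1) ^+ (#|v| + #|w|) * P w =
  - ((-1) ^+ (#|u| + #|w|) * P w).
  move=> wu; rewrite -big_distrl /=; under eq_bigr do rewrite exprD.
  by rewrite -big_distrl /= sum_sign_proper_supsets // exprD !mulNr.
rewrite (eq_bigr _ inner) sumrN opprK [RHS](bigD1 u) //= exprD -mulrA signrMK.
by congr (_ + _); apply: eq_bigl => w; rewrite finset.properEneq andbC.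
Qed.

End SubsetLattice.

Section SupersetCount.
Context {T : finType}.
Implicit Types u w : {set T}.

Lemma card_supsets_of_size w n : (n <= #|T|)%N ->
  #|[set u : {set T} | (w \subset u) && (#|u| == n)]| = 'C(#|T| - #|w|, #|T| - n).
Proof.
move=> le_n_T; have -> : (#|T| - #|w| = #|~: w|)%N by rewrite -(cardsC w) addKn.
rewrite -cards_draws -(card_preimset _ (inv_inj (@finset.setCK T))).
apply: eq_card => u; rewrite !inE finset.subsetC; congr (_ && _).
by rewrite [#|u|]cardsCs eqn_sub2lE ?max_card.
Qed.

Lemma sum_supsets_by_card {V : nmodType} (F : nat -> V) w k : (k <= #|T|)%N ->
  \sum_(u : {set T} | (#|u| <= k)%N && (w \subset u)) F #|u| =
  \sum_(#|w| <= n < k.+1) F n *+ 'C(#|T| - #|w|, n - #|w|).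
Proof.
move=> le_k_T; have le_w_T : (#|w| <= #|T|)%N := max_card w.
have sum_card n : (n <= #|T|)%N ->
    \sum_(u : {set T} | (w \subset u) && (n == #|u|)) F n =
    F n *+ 'C(#|T| - #|w|, #|T| - n).
  move=> le_n_T; rewrite -card_supsets_of_size // -sumr_const.
  by apply: eq_bigl => u; rewrite inE eq_sym.
transitivity
  (\sum_(u : {set T} | w \subset u) \sum_(n < k.+1 | n == #|u| :> nat) F n).
  by rewrite big_mkcondl; apply: eq_bigr => u _; rewrite big_ord1_eq ltnS.
rewrite (exchange_big_dep xpredT) //= big_geq_mkord.
rewrite (bigID (fun n : 'I_k.+1 => #|w| <= n)%N) /=.
have le_n_T (n : 'I_k.+1) : (n <= #|T|)%N.
  by rewrite -ltnS (leq_trans (ltn_ord n)).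
rewrite [X in _ + X]big1 ?addr0 => [|n]; last first.
  by rewrite -ltnNge sum_card // => lt_n_w; rewrite bin_small ?mulr0n //; lia.
apply: eq_bigr => n le_w_n; rewrite sum_card // -bin_sub; last by lia.
by congr (_ *+ 'C(_, _)); have := le_n_T n; lia.
Qed.

End SupersetCount.

Section AnovaTerms.
Variables (R : realType) (d : nat) (f : d.-tuple R -> R) (x : d.-tuple R).
Implicit Types u v : {set 'I_d}.

Lemma anova_aux_fuel n m u : (#|u| < n)%N -> (#|u| < m)%N ->
  anova_aux n f u x = anova_aux m f u x.
Proof.
elim: n m u => [//|n IH] [//|m] u /= lt_u_n lt_u_m; congr (_ - _).
by apply: eq_bigr => v /proper_card lt_v_u; apply: IH; apply: leq_trans lt_v_u _.
Qed.

Lemma anova_rec u :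
  anova f u x = projP u f x - \sum_(v : {set 'I_d} | v \proper u) anova f v x.
Proof.
rewrite {1}/anova /=; congr (_ - _); apply: eq_bigr => v /proper_card lt_v_u.
exact: anova_aux_fuel lt_v_u (ltnSn _).
Qed.

Lemma anova_moebius u :
  anova f u x =
  \sum_(v : {set 'I_d} | v \subset u) (-1) ^+ (#|u| + #|v|) * projP v f x.
Proof. exact: (subset_moebius_inversion (fun v => anova f v x) _ anova_rec). Qed.

End AnovaTerms.

Theorem corollary4p5 (R : realType) (d : nat) (f : d.-tuple R -> R)
  (hf : L2_torus f) (ds : nat) (hds : (1 <= ds <= d)%N)
  (x : d.-tuple R) (hx : torus_pt x) :
  trunc_anova ds f x =
  \sum_(u : {set 'I_d} | (#|u| <= ds)%N)
     (\sum_(#|u| <= n < ds.+1)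
        (-1) ^+ (n - #|u|) * ('C(d - #|u|, n - #|u|))%:R) * projP u f x.
Proof.
have le_ds_d : (ds <= #|'I_d|)%N by rewrite card_ord; case/andP: hds.
rewrite /trunc_anova; under eq_bigr do rewrite anova_moebius.
rewrite (exchange_big_dep (fun v : {set 'I_d} => #|v| <= ds)%N) /=; last first.
  by move=> u v le_u_ds /subset_leq_card le_v_u; apply: leq_trans le_v_u le_u_ds.
apply: eq_bigr => v _; rewrite -big_distrl /=; congr (_ * _).
have := sum_supsets_by_card (fun n => (-1) ^+ (n + #|v|) : R) v _ le_ds_d.
rewrite card_ord /= => ->.
apply: eq_big_nat => n /andP[le_v_n _]; rewrite mulr_natr.
by rewrite -signr_odd -[in RHS]signr_odd oddD oddB.
Qed.
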